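(* Let $\mathcal{H}$ be a complex Hilbert space and $B\in\mathcal{B}(\mathcal{H})$. Then for every $0\le\alpha\le1$, $$w^4(B)\le\frac{1+\alpha}{8}\big\||B|^4+|B^*|^4\big\|+\frac{1-\alpha}{4}w^2(B^2)+\frac14\big\||B|^2+|B^*|^2\big\|\,w(B^2).$$
   Context: $\mathcal{B}(\mathcal{H})$ is the algebra of bounded linear operators on $\mathcal{H}$ with operator norm $\|\cdot\|$. For $A\in\mathcal{B}(\mathcal{H})$, $A^*$ is the adjoint, $|A|=(A^*A)^{1/2}$, $|A^*|=(AA^* )^{1/2}$, and $w(A)=\sup_{\|x\|=1}|\langle Ax,x\rangle|$ is the numerical radius. *)

From HB Require Import structures.
From mathcomp Require Import all_boot all_order all_algebra.
From mathcomp Require Import classical_sets reals.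
From mathcomp.real_closed Require Import complex.
Set Implicit Arguments. Unset Strict Implicit. Unset Printing Implicit Defensive.
Import Order.TTheory GRing.Theory Num.Theory.
Local Open Scope ring_scope.
Local Open Scope classical_set_scope.

Section Hilbert.
Variables (R : realType) (V : lmodType R[i]).

Definition is_inner_product (ip : V -> V -> R[i]) : Prop :=
  [/\ forall (a : R[i]) (x y z : V), ip (a *: x + y) z = a * ip x z + ip y z,
      forall x y : V, ip y x = conjc (ip x y),
      forall x : V, complex.Im (ip x x) = 0 /\ 0 <= complex.Re (ip x x)
    & forall x : V, ip x x = 0 -> x = 0].

Definition hnorm (ip : V -> V -> R[i]) (x : V) : R := Num.sqrt (complex.Re (ip x x)).

Definition is_complete (ip : V -> V -> R[i]) : Prop :=
  forall u : nat -> V,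
    (forall e : R, 0 < e -> exists N : nat, forall m n : nat,
        (N <= m)%N -> (N <= n)%N -> hnorm ip (u m - u n) < e) ->
    exists l : V, forall e : R, 0 < e -> exists N : nat, forall n : nat,
        (N <= n)%N -> hnorm ip (u n - l) < e.

Definition is_hilbert (ip : V -> V -> R[i]) : Prop :=
  is_inner_product ip /\ is_complete ip.

Definition is_linear_op (T : V -> V) : Prop :=
  forall (a : R[i]) (x y : V), T (a *: x + y) = a *: T x + T y.

Definition is_bounded_op (ip : V -> V -> R[i]) (T : V -> V) : Prop :=
  is_linear_op T /\ exists c : R, forall x : V, hnorm ip (T x) <= c * hnorm ip x.

Definition is_adjoint (ip : V -> V -> R[i]) (T S : V -> V) : Prop :=
  forall x y : V, ip (T x) y = ip x (S y).

Definition opnorm (ip : V -> V -> R[i]) (T : V -> V) : R :=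
  sup [set hnorm ip (T x) | x in [set x : V | hnorm ip x = 1]].

Definition numrad (ip : V -> V -> R[i]) (T : V -> V) : R :=
  sup [set ComplexField.Normc.normc (ip (T x) x) | x in [set x : V | hnorm ip x = 1]].

End Hilbert.

(* Fix a unit vector x and put p = |<Bx,x>|, q = |<B^2 x,x>|,
   a = ||Bx||, b = ||B^* x||.  Buzano's inequality |<u,e><e,v>| <= (|<u,v>| +
   ||u|| ||v||)/2 with u = Bx, e = x, v = B^* x gives 2 p^2 <= q + ab, and
   Cauchy-Schwarz gives q <= ab.  Moreover a^2 + b^2 = <(|B|^2+|B^*|^2)x,x>,
   a^4 + b^4 <= <(|B|^4+|B^*|^4)x,x> and q <= w(B^2); a purely scalar
   inequality then bounds p^4 by the right-hand side.  Taking the supremum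
   over unit vectors finishes the proof. *)
From mathcomp Require Import all_boot all_order all_algebra.
From mathcomp Require Import classical_sets reals.
From mathcomp.real_closed Require Import complex.
From mathcomp Require Import ring lra boolp.
Set Implicit Arguments.
Unset Strict Implicit.
Unset Printing Implicit Defensive.
Import Order.TTheory GRing.Theory Num.Theory.
Local Open Scope ring_scope.

(* The scalar core of the argument: from Buzano (2p^2 <= q + ab), Cauchy-Schwarz
   (q <= ab) and the bounds a^2+b^2 <= N2, a^4+b^4 <= N4, q <= W, we get the
   convex combination of the two estimates q^2 <= (ab)^2 <= N4/2 and q^2 <= W^2. *)
Lemma fourth_power_bound (R : realFieldType) (p q a b N2 N4 W al : R) :
  0 <= p -> 0 <= q -> 0 <= a -> 0 <= b -> 0 <= al -> al <= 1 ->
  2 * p ^+ 2 <= q + a * b -> q <= a * b -> a ^+ 2 + b ^+ 2 <= N2 ->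
  a ^+ 4 + b ^+ 4 <= N4 -> q <= W ->
  p ^+ 4 <= (1 + al) / 8 * N4 + (1 - al) / 4 * W ^+ 2 + 1 / 4 * N2 * W.
Proof.
move=> p0 q0 a0 b0 al0 al1 buz qab ab2 ab4 qW.
have ab0 : 0 <= a * b by exact: mulr_ge0.
have p4 : 4 * p ^+ 4 <= (q + a * b) ^+ 2.
  have -> : 4 * p ^+ 4 = (2 * p ^+ 2) ^+ 2 by ring.
  by rewrite !expr2; apply: ler_pM; rewrite // mulr_ge0 // sqr_ge0.
have amgm2 : 2 * (a * b) <= N2.
  have : 0 <= (a - b) ^+ 2 by exact: sqr_ge0.
  have -> : (a - b) ^+ 2 = a ^+ 2 + b ^+ 2 - 2 * (a * b) by ring.
  lra.
have amgm4 : 2 * (a * b) ^+ 2 <= N4.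
  have : 0 <= (a ^+ 2 - b ^+ 2) ^+ 2 by exact: sqr_ge0.
  have -> : (a ^+ 2 - b ^+ 2) ^+ 2 = a ^+ 4 + b ^+ 4 - 2 * (a * b) ^+ 2 by ring.
  lra.
have cross : 2 * (q * (a * b)) <= N2 * W.
  rewrite mulrCA [N2 * W]mulrC; apply: ler_pM => //; lra.
have q2 : q ^+ 2 <= al * (N4 / 2) + (1 - al) * W ^+ 2.
  have -> : q ^+ 2 = al * q ^+ 2 + (1 - al) * q ^+ 2 by ring.
  by apply: lerD; apply: ler_wpM2l; nra.
have sq : (q + a * b) ^+ 2 = q ^+ 2 + 2 * (q * (a * b)) + (a * b) ^+ 2 by ring.
rewrite sq in p4; lra.
Qed.

Section ComplexModulus.
Variable R : rcfType.
Local Notation normc := (@ComplexField.Normc.normc R).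

Definition sqrmod (z : R[i]) : R := complex.Re z ^+ 2 + complex.Im z ^+ 2.

Lemma mulcJ (z : R[i]) : z * conjc z = (sqrmod z)%:C%C.
Proof.
case: z => a b; apply/eqP; rewrite eq_complex /=.
by apply/andP; split; apply/eqP; rewrite /sqrmod /=; ring.
Qed.

Lemma sqrmod_ge0 (z : R[i]) : 0 <= sqrmod z.
Proof. rewrite /sqrmod; nra. Qed.

Lemma normc_sqrmod (z : R[i]) : normc z = Num.sqrt (sqrmod z).
Proof. by case: z. Qed.

Lemma normc_ge0 (z : R[i]) : 0 <= normc z.
Proof. by rewrite normc_sqrmod sqrtr_ge0. Qed.

Lemma Re_le_normc (z : R[i]) : complex.Re z <= normc z.
Proof.
have := sqr_sqrtr (sqrmod_ge0 z); rewrite -normc_sqrmod /sqrmod.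
have := normc_ge0 z; nra.
Qed.

Lemma normc2M (z : R[i]) : normc (2 * z) = 2 * normc z.
Proof. by rewrite mulr_natl normcMn mulr_natl. Qed.

Lemma conjc_Re (z : R[i]) : complex.Re (conjc z) = complex.Re z.
Proof. by case: z. Qed.

End ComplexModulus.

Section Suprema.
Variable R : realType.

(* A supremum of nonnegative reals is nonnegative; this includes the default
   value 0 that sup takes on sets without a supremum. *)
Lemma sup_ge0 (E : set R) : (forall e, E e -> 0 <= e) -> 0 <= sup E.
Proof.
move=> E0; have [[[e Ee] ubE]|?] := pselect (has_sup E); last by rewrite sup_out.
exact: le_trans (E0 e Ee) (ub_le_sup ubE Ee).
Qed.

Lemma sup_le_of_expn (E : set R) n r : 0 <= r ->
  (forall e, E e -> 0 <= e /\ e ^+ n.+1 <= r ^+ n.+1) -> sup E <= r.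
Proof.
move=> r0 HE; have [->|/set0P E_nonempty] := eqVneq E set0; first by rewrite sup0.
apply: ge_sup => // e /HE [e0 er].
by rewrite -(ler_pXn2r (ltn0Sn n)) ?nnegrE.
Qed.

End Suprema.

Section InnerProductSpace.
Variables (R : realType) (V : lmodType R[i]) (ip : V -> V -> R[i]).
Hypothesis ip_inner : is_inner_product ip.

Local Notation normc := (@ComplexField.Normc.normc R).

Lemma ipDZl a x y z : ip (a *: x + y) z = a * ip x z + ip y z.
Proof. by case: ip_inner. Qed.

Lemma ipC x y : ip y x = conjc (ip x y).
Proof. by case: ip_inner. Qed.

Lemma ip0l z : ip 0 z = 0.
Proof.
have := ipDZl 1 0 0 z; rewrite scaler0 addr0 mul1r => E.
by apply: (addrI (ip 0 z)); rewrite addr0 -E.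
Qed.

Lemma ipDl x y z : ip (x + y) z = ip x z + ip y z.
Proof. by rewrite -[x]scale1r ipDZl mul1r scale1r. Qed.

Lemma Re_ipDl x y z :
  complex.Re (ip (x + y) z) = complex.Re (ip x z) + complex.Re (ip y z).
Proof. by rewrite ipDl raddfD. Qed.

Lemma ipZl a x z : ip (a *: x) z = a * ip x z.
Proof. by rewrite -[a *: x]addr0 ipDZl ip0l addr0. Qed.

Lemma ipDr x y z : ip z (x + y) = ip z x + ip z y.
Proof. by rewrite ipC ipDl rmorphD /= -!ipC. Qed.

Lemma ipZr a x z : ip z (a *: x) = conjc a * ip z x.
Proof. by rewrite ipC ipZl rmorphM /= -!ipC. Qed.

Lemma ipxx_real x : ip x x = (complex.Re (ip x x))%:C%C.
Proof. by case: ip_inner => _ _ /(_ x) [+ _]; case: (ip x x) => a b /= ->. Qed.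

Lemma Re_ipxx_ge0 x : 0 <= complex.Re (ip x x).
Proof. by case: ip_inner => _ _ /(_ x) []. Qed.

Lemma hnorm_ge0 x : 0 <= hnorm ip x.
Proof. exact: sqrtr_ge0. Qed.

Lemma hnorm_sqr x : hnorm ip x ^+ 2 = complex.Re (ip x x).
Proof. by rewrite /hnorm sqr_sqrtr // Re_ipxx_ge0. Qed.

Lemma ipxx_eq0 x : complex.Re (ip x x) = 0 -> x = 0.
Proof. by move=> H; case: ip_inner => _ _ _; apply; rewrite ipxx_real H. Qed.

Lemma ip_unit e : hnorm ip e = 1 -> ip e e = 1.
Proof. by move=> He; rewrite ipxx_real -hnorm_sqr He expr1n. Qed.

(* Cauchy-Schwarz in squared form, via <w,w> >= 0 for w = <y,y> x - <x,y> y. *)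
Lemma cauchy_schwarz_sqr x y :
  sqrmod (ip x y) <= complex.Re (ip x x) * complex.Re (ip y y).
Proof.
set A := complex.Re (ip x x); set C := complex.Re (ip y y); set z := ip x y.
have A0 : 0 <= A by exact: Re_ipxx_ge0.
have [C0|Cneq0] := eqVneq C 0.
  by rewrite /z (ipxx_eq0 C0) ipC ip0l /sqrmod /= C0; nra.
have Cpos : 0 < C by rewrite lt_def Cneq0 Re_ipxx_ge0.
pose w := C%:C%C *: x + (- z) *: y.
have ipww : ip w w = (C * (C * A - sqrmod z))%:C%C.
  rewrite /w !ipDl !ipZl !ipDr !ipZr [ip x x]ipxx_real [ip y y]ipxx_real.
  rewrite -/A -/C (ipC x y) -/z conjc_real rmorphN.
  have := mulcJ z; have := mulcJ (conjc z); rewrite conjcK => E1 E2.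
  by rewrite !rmorphM !rmorphB /= -E2; ring.
have := Re_ipxx_ge0 w; rewrite ipww /=; nra.
Qed.

Lemma cauchy_schwarz x y : normc (ip x y) <= hnorm ip x * hnorm ip y.
Proof.
rewrite normc_sqrmod /hnorm -sqrtrM ?Re_ipxx_ge0 //.
exact/ler_wsqrtr/cauchy_schwarz_sqr.
Qed.

(* Buzano's inequality: for a unit vector e,
   2 |<u,e><e,v>| <= |<u,v>| + ||u|| ||v||.  Apply Cauchy-Schwarz to the
   reflection u' = 2<u,e> e - u, which has the same norm as u. *)
Lemma buzano u e v : hnorm ip e = 1 ->
  normc (2 * (ip u e * ip e v)) <= normc (ip u v) + hnorm ip u * hnorm ip v.
Proof.
move=> /ip_unit ee1.
pose u' := (2 * ip u e) *: e + (-1) *: u.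
have ipu'v : ip u' v = 2 * (ip u e * ip e v) - ip u v.
  by rewrite /u' ipDl !ipZl mulN1r mulrA.
have normu' : hnorm ip u' = hnorm ip u.
  rewrite /hnorm /u' !ipDl !ipZl !ipDr !ipZr ee1 (ipC u e).
  have conjc2 (t : R[i]) : conjc (2 * t) = 2 * conjc t.
    case: t => a b; apply/eqP; rewrite eq_complex /=.
    by apply/andP; split; apply/eqP; ring.
  by rewrite conjc2 (rmorphN1 conjc); congr (Num.sqrt (complex.Re _)); ring.
have := cauchy_schwarz u' v; rewrite normu' ipu'v => CS.
rewrite -[2 * _](subrK (ip u v)); apply: le_trans (le_normcD _ _) _.
by rewrite addrC lerD2l.
Qed.

Lemma hnormD x y : hnorm ip (x + y) <= hnorm ip x + hnorm ip y.
Proof.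
have E : hnorm ip (x + y) ^+ 2 =
         hnorm ip x ^+ 2 + hnorm ip y ^+ 2 + 2 * complex.Re (ip x y).
  by rewrite !hnorm_sqr ipDl !ipDr (ipC x y) !raddfD /= conjc_Re; lra.
have := Re_le_normc (ip x y); have := cauchy_schwarz x y.
have := hnorm_ge0 x; have := hnorm_ge0 y; have := hnorm_ge0 (x + y); nra.
Qed.

(* Maps with ||T y|| <= K ||y||; no linearity is needed for the norm estimates
   below, which only ever evaluate T at a single vector. *)
Definition bounded (T : V -> V) : Prop :=
  exists K, 0 <= K /\ forall y, hnorm ip (T y) <= K * hnorm ip y.

Lemma bounded_comp S T : bounded S -> bounded T -> bounded (fun y => S (T y)).
Proof.
move=> [K1 [K10 HS]] [K2 [K20 HT]]; exists (K1 * K2); split; first exact: mulr_ge0.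
by move=> y; apply: le_trans (HS _) _; rewrite -mulrA ler_wpM2l.
Qed.

Lemma bounded_add S T : bounded S -> bounded T -> bounded (fun y => S y + T y).
Proof.
move=> [K1 [K10 HS]] [K2 [K20 HT]]; exists (K1 + K2); split; first exact: addr_ge0.
by move=> y; apply: le_trans (hnormD _ _) _; rewrite mulrDl lerD.
Qed.

Lemma bounded_on_sphere T :
  bounded T -> exists K, forall y, hnorm ip y = 1 -> hnorm ip (T y) <= K.
Proof. by move=> [K [_ HT]]; exists K => y y1; have := HT y; rewrite y1 mulr1. Qed.

Lemma normc_ip_le_hnorm T x :
  hnorm ip x = 1 -> normc (ip (T x) x) <= hnorm ip (T x).
Proof. by move=> x1; apply: le_trans (cauchy_schwarz _ _) _; rewrite x1 mulr1. Qed.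

Lemma Re_ip_le_hnorm T x :
  hnorm ip x = 1 -> complex.Re (ip (T x) x) <= hnorm ip (T x).
Proof. by move=> x1; apply: le_trans (Re_le_normc _) (normc_ip_le_hnorm T x1). Qed.

Lemma hnorm_le_opnorm T x :
  bounded T -> hnorm ip x = 1 -> hnorm ip (T x) <= opnorm ip T.
Proof.
move=> /bounded_on_sphere [K HK] x1; apply: ub_le_sup; last by exists x.
by exists K => _ [y y1 <-]; exact: HK.
Qed.

Lemma normc_ip_le_numrad T x :
  bounded T -> hnorm ip x = 1 -> normc (ip (T x) x) <= numrad ip T.
Proof.
move=> /bounded_on_sphere [K HK] x1; apply: ub_le_sup; last by exists x.
by exists K => _ [y y1 <-]; apply: le_trans (normc_ip_le_hnorm T y1) (HK _ y1).
Qed.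

(* Both suprema are nonnegative, whether or not the space has unit vectors. *)
Lemma opnorm_ge0 T : 0 <= opnorm ip T.
Proof. by apply: sup_ge0 => _ [y _ <-]; exact: hnorm_ge0. Qed.

Lemma numrad_ge0 T : 0 <= numrad ip T.
Proof. by apply: sup_ge0 => _ [y _ <-]; exact: normc_ge0. Qed.

Section Adjoint.
Variables (S Sa : V -> V).
Hypothesis S_adj : is_adjoint ip S Sa.

Lemma adjoint_sym : is_adjoint ip Sa S.
Proof. by move=> x y; rewrite ipC -S_adj -ipC. Qed.

Lemma hnorm_sqr_adj x : hnorm ip (S x) ^+ 2 = complex.Re (ip (Sa (S x)) x).
Proof. by rewrite hnorm_sqr -adjoint_sym. Qed.

(* On the unit sphere ||S x||^4 <= ||S^* S x||^2 = <(S^* S)^2 x, x>. *)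
Lemma hnorm4_adj x : hnorm ip x = 1 ->
  hnorm ip (S x) ^+ 4 <= complex.Re (ip (Sa (S (Sa (S x)))) x).
Proof.
move=> x1; rewrite adjoint_sym S_adj -hnorm_sqr.
have -> : hnorm ip (S x) ^+ 4 = (hnorm ip (S x) ^+ 2) ^+ 2 by rewrite -exprM.
apply: lerXn2r; rewrite ?nnegrE ?exprn_ge0 ?hnorm_ge0 //.
by rewrite hnorm_sqr_adj; exact: (Re_ip_le_hnorm (fun y => Sa (S y)) x1).
Qed.

(* The adjoint of a bounded map is bounded:
   ||S^* y||^2 = <S S^* y, y> <= K ||S^* y|| ||y||. *)
Lemma bounded_adjoint : bounded S -> bounded Sa.
Proof.
move=> [K [K0 HK]]; exists K; split => // y.
have [Say0|Say_neq0] := eqVneq (hnorm ip (Sa y)) 0.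
  by rewrite Say0 mulr_ge0 ?hnorm_ge0.
have Say_pos : 0 < hnorm ip (Sa y) by rewrite lt_def Say_neq0 hnorm_ge0.
rewrite -(ler_pM2r Say_pos) -expr2 hnorm_sqr -S_adj.
apply: le_trans (Re_le_normc _) _; apply: le_trans (cauchy_schwarz _ _) _.
rewrite mulrAC; apply: ler_wpM2r; [exact: hnorm_ge0 | exact: HK].
Qed.

End Adjoint.
End InnerProductSpace.

Section NumericalRadiusBound.
Variables (R : realType) (V : lmodType R[i]) (ip : V -> V -> R[i]) (B Bs : V -> V).
Hypotheses (ip_inner : is_inner_product ip) (B_adj : is_adjoint ip B Bs).
Hypothesis B_bounded : bounded ip B.

Local Notation normc := (@ComplexField.Normc.normc R).

Let Bs_adj : is_adjoint ip Bs B := adjoint_sym ip_inner B_adj.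
Let Bs_bounded : bounded ip Bs := bounded_adjoint ip_inner B_adj B_bounded.

Definition rhs11 (al : R) : R :=
  (1 + al) / 8 * opnorm ip (fun x => Bs (B (Bs (B x))) + B (Bs (B (Bs x))))
  + (1 - al) / 4 * numrad ip (fun x => B (B x)) ^+ 2
  + 1 / 4 * opnorm ip (fun x => Bs (B x) + B (Bs x)) * numrad ip (fun x => B (B x)).

Lemma pointwise_bound al x : hnorm ip x = 1 -> 0 <= al -> al <= 1 ->
  normc (ip (B x) x) ^+ 4 <= rhs11 al.
Proof.
move=> x1 al0 al1.
apply: (@fourth_power_bound R _ (normc (ip (B (B x)) x))
          (hnorm ip (B x)) (hnorm ip (Bs x)));
  rewrite ?normc_ge0 ?hnorm_ge0 //.
- (* Buzano with u = Bx, e = x, v = B^* x: 2 p^2 <= q + ab *)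
  have := buzano ip_inner (B x) (Bs x) x1.
  by rewrite -B_adj -B_adj normc2M ComplexField.Normc.normcM expr2.
- (* q = |<Bx, B^* x>| <= ab *)
  by rewrite B_adj; exact: cauchy_schwarz.
- (* a^2 + b^2 = <(Bs B + B Bs) x, x> <= ||Bs B + B Bs|| *)
  have bdd := bounded_add ip_inner (bounded_comp Bs_bounded B_bounded)
                (bounded_comp B_bounded Bs_bounded).
  apply: (le_trans _ (hnorm_le_opnorm bdd x1)).
  apply: (le_trans _ (Re_ip_le_hnorm ip_inner (fun y => Bs (B y) + B (Bs y)) x1)).
  by rewrite (Re_ipDl ip_inner) -(hnorm_sqr_adj ip_inner B_adj)
             -(hnorm_sqr_adj ip_inner Bs_adj).
- (* a^4 + b^4 <= <((Bs B)^2 + (B Bs)^2) x, x> <= ||(Bs B)^2 + (B Bs)^2|| *)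
  have bdd := bounded_add ip_inner
    (bounded_comp Bs_bounded
       (bounded_comp B_bounded (bounded_comp Bs_bounded B_bounded)))
    (bounded_comp B_bounded
       (bounded_comp Bs_bounded (bounded_comp B_bounded Bs_bounded))).
  apply: (le_trans _ (hnorm_le_opnorm bdd x1)).
  apply: (le_trans _ (Re_ip_le_hnorm ip_inner
    (fun y => Bs (B (Bs (B y))) + B (Bs (B (Bs y)))) x1)).
  rewrite (Re_ipDl ip_inner); apply: lerD.
  + exact: (hnorm4_adj ip_inner B_adj).
  + exact: (hnorm4_adj ip_inner Bs_adj).
-
  exact: (normc_ip_le_numrad ip_inner (bounded_comp B_bounded B_bounded)).
Qed.

(* The right-hand side is nonnegative, so it has a fourth root. *)
Lemma rhs11_ge0 al : 0 <= al -> al <= 1 -> 0 <= rhs11 al.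
Proof.
move=> al0 al1; rewrite /rhs11.
have := opnorm_ge0 ip (fun x => Bs (B (Bs (B x))) + B (Bs (B (Bs x)))).
have := opnorm_ge0 ip (fun x => Bs (B x) + B (Bs x)).
have := numrad_ge0 ip (fun x => B (B x)).
nra.
Qed.

(* Taking the supremum over unit vectors: w(B)^4 <= rhs11, comparing with the
   fourth root of rhs11. *)
Lemma numrad_bound al : 0 <= al -> al <= 1 -> numrad ip B ^+ 4 <= rhs11 al.
Proof.
move=> al0 al1; have rhs0 := rhs11_ge0 al0 al1.
pose r := Num.sqrt (Num.sqrt (rhs11 al)).
have r0 : 0 <= r := sqrtr_ge0 _.
have r4 : r ^+ 4 = rhs11 al by rewrite (exprM r 2 2) !sqr_sqrtr ?sqrtr_ge0.
have w_le_r : numrad ip B <= r.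
  apply: (sup_le_of_expn (n := 3)) => // _ [x x1 <-].
  by rewrite normc_ge0 r4; split => //; exact: pointwise_bound.
by rewrite -r4 lerXn2r ?nnegrE ?numrad_ge0.
Qed.

End NumericalRadiusBound.

Theorem mainTheorem11 (R : realType) (V : lmodType R[i])
    (ip : V -> V -> R[i]) (B Bs : V -> V) (alpha : R) :
  is_hilbert ip -> is_bounded_op ip B -> is_adjoint ip B Bs ->
  0 <= alpha -> alpha <= 1 ->
  numrad ip B ^+ 4 <=
    (1 + alpha) / 8 *
      opnorm ip (fun x => Bs (B (Bs (B x))) + B (Bs (B (Bs x))))
    + (1 - alpha) / 4 * numrad ip (fun x => B (B x)) ^+ 2
    + 1 / 4 * opnorm ip (fun x => Bs (B x) + B (Bs x))
            * numrad ip (fun x => B (B x)).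
Proof.
move=> [ip_inner _] [_ [c Bc]] B_adj al0 al1.
have B_bounded : bounded ip B.
  exists `|c|; split=> // y; apply: le_trans (Bc y) _.
  by rewrite ler_wpM2r ?hnorm_ge0 ?ler_norm.
exact: (numrad_bound ip_inner B_adj B_bounded al0 al1).
Qed.
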